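(* Let $0<\lambda<\frac{5-\sqrt{21}}{2}$ and let $K$ be the attractor of the IFS $f_1(x)=\lambda x$, $f_2(x)=\lambda x+2\lambda$, $f_3(x)=\lambda x+3\lambda-\lambda^2$, $f_4(x)=\lambda x+1-\lambda$. Then every $x\in K$ either has exactly $2^k$ codings for some integer $k\ge0$, or has uncountably many codings.
   Context: A coding of $x\in K$ is a sequence $(i_n)\in\{1,2,3,4\}^{\mathbb{N}}$ with $x=\lim_{n\to\infty}f_{i_1}\circ\cdots\circ f_{i_n}(0)$. *)

From Stdlib Require Import Reals List Rtopology.
Open Scope R_scope.

Inductive digit : Type := d1 | d2 | d3 | d4.

Definition f (lam : R) (i : digit) (x : R) : R :=
  match i with
  | d1 => lam * x
  | d2 => lam * x + 2 * lam
  | d3 => lam * x + 3 * lam - lam ^ 2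
  | d4 => lam * x + 1 - lam
  end.

(* comp lam s n y = f_{s 0} o f_{s 1} o ... o f_{s (n-1)} (y)
   (the paper's i_1, i_2, ... are s 0, s 1, ...) *)
Fixpoint comp (lam : R) (s : nat -> digit) (n : nat) (y : R) : R :=
  match n with
  | O => y
  | S m => comp lam s m (f lam (s m) y)
  end.

Definition coding (lam : R) (s : nat -> digit) (x : R) : Prop :=
  Un_cv (fun n => comp lam s n 0) x.

Definition is_attractor (lam : R) (K : R -> Prop) : Prop :=
  compact K /\ (exists x, K x) /\
  (forall x, K x <-> exists (i : digit) (y : R), K y /\ x = f lam i y).

Definition has_card (A : (nat -> digit) -> Prop) (n : nat) : Prop :=
  exists l : list (nat -> digit),
    length l = n /\ NoDup l /\ forall s, A s <-> In s l.

Definition countable_set (A : (nat -> digit) -> Prop) : Prop :=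
  exists g : (nat -> digit) -> nat,
    forall s t, A s -> A t -> g s = g t -> s = t.

(* The only coincidence among compositions of the maps is f2 o f4 = f3 o f1, and for
   lam < (5 - sqrt 21)/2 it is the only source of non-uniqueness: the intervals f_i([0,1])
   are disjoint except f2([0,1]) and f3([0,1]), whose overlap is f2 f4([0,1]) = f3 f1([0,1]).
   So two codings of a point agree in their first digit or begin with 24 and 31.  As blocks
   24 and 31 cannot overlap, all codings of x arise from one of them by independently
   exchanging any of its blocks 24 <-> 31.  Finitely many blocks, k say, give exactly 2^k
   codings; infinitely many give an injection of {0,1}^N into the codings. *)

From Pilot Require Import Defs.
From Stdlib Require Import Reals List Rtopology Lra Lia Wf_nat
  FunctionalExtensionality PropExtensionality ClassicalEpsilon Classical FinFun.
(* [Reals] shadows the digits [d1 .. d4] by [Ranalysis1.d1 ..]. *)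
Import Defs.
Open Scope R_scope.

Definition shift {A : Type} (s : nat -> A) : nat -> A := fun n => s (S n).

Definition scons {A : Type} (a : A) (s : nat -> A) : nat -> A :=
  fun n => match n with O => a | S m => s m end.

Lemma scons_head_shift {A : Type} (s : nat -> A) : scons (s 0%nat) (shift s) = s.
Proof. apply functional_extensionality; intros [|n]; reflexivity. Qed.

Lemma scons2_head_shift {A : Type} (s : nat -> A) :
  scons (s 0%nat) (scons (s 1%nat) (shift (shift s))) = s.
Proof. apply functional_extensionality; intros [|[|n]]; reflexivity. Qed.

Lemma scons_inj {A : Type} (a : A) (u v : nat -> A) : scons a u = scons a v -> u = v.
Proof.
  intros E; apply functional_extensionality; intros n.
  exact (f_equal (fun w => w (S n)) E).
Qed.

Lemma has_card_ext (A B : (nat -> digit) -> Prop) n :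
  (forall s, A s <-> B s) -> has_card A n -> has_card B n.
Proof.
  intros H [l [Hl [Hnd Hm]]]; exists l; repeat split; auto; intros Hs.
  - apply Hm, H, Hs.
  - apply H, Hm, Hs.
Qed.

Lemma has_card_singleton (s : nat -> digit) : has_card (fun t => t = s) 1.
Proof.
  exists (s :: nil); repeat split.
  - constructor; [intros []|constructor].
  - intros ->; left; reflexivity.
  - intros [->|[]]; reflexivity.
Qed.

Lemma has_card_image (g : (nat -> digit) -> nat -> digit) A n : Injective g ->
  has_card A n -> has_card (fun t => exists u, t = g u /\ A u) n.
Proof.
  intros Hg [l [Hl [Hnd Hm]]]; exists (map g l); repeat split.
  - rewrite length_map; exact Hl.
  - apply Injective_map_NoDup; assumption.
  - intros [u [-> Hu]]; apply in_map, Hm, Hu.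
  - intros Ht; apply in_map_iff in Ht as [u [<- Hu]]; exists u; split; [reflexivity|apply Hm, Hu].
Qed.

Lemma has_card_disjoint_union A B n m : (forall t, A t -> B t -> False) ->
  has_card A n -> has_card B m -> has_card (fun t => A t \/ B t) (n + m).
Proof.
  intros Hd [l [Hl [Hnd Hm]]] [l' [Hl' [Hnd' Hm']]]; exists (l ++ l'); repeat split.
  - rewrite length_app; lia.
  - apply NoDup_app; auto; intros t Ht Ht'; apply (Hd t); [apply Hm | apply Hm']; assumption.
  - intros [Ht|Ht]; apply in_or_app; [left; apply Hm | right; apply Hm']; exact Ht.
  - intros Ht; apply in_app_or in Ht as [Ht|Ht]; [left; apply Hm | right; apply Hm']; exact Ht.
Qed.

Lemma injective_left_inverse {A B : Type} (a0 : A) (g : A -> B) : Injective g ->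
  exists q : B -> A, forall a, q (g a) = a.
Proof.
  intros Hg.
  exists (fun y => match excluded_middle_informative (exists a, g a = y) with
           | left H => proj1_sig (constructive_indefinite_description _ H)
           | right _ => a0
           end).
  intros a; destruct (excluded_middle_informative _) as [H|H]; [|exfalso; eauto].
  destruct (constructive_indefinite_description _ H) as [a' Ha']; apply Hg, Ha'.
Qed.

Lemma cantor_no_injection (g : (nat -> bool) -> nat) : ~ Injective g.
Proof.
  intros Hg; destruct (injective_left_inverse (fun _ => false) g Hg) as [q Hq].
  set (d := fun n => negb (q n n)).
  assert (Hd : d (g d) = negb (d (g d))) by (unfold d at 1; rewrite Hq; reflexivity).
  destruct (d (g d)); discriminate.
Qed.

Lemma strictly_increasing_enumeration (P : nat -> Prop) :
  (forall N, exists i, (N <= i)%nat /\ P i) ->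
  exists p : nat -> nat, (forall n, p n < p (S n))%nat /\ forall n, P (p n).
Proof.
  intros H.
  set (next := fun N => proj1_sig (constructive_indefinite_description _ (H N))).
  assert (Hnext : forall N, (N <= next N)%nat /\ P (next N))
    by (intros N; unfold next; destruct constructive_indefinite_description; assumption).
  set (p := fix p n := match n with O => next O | S k => next (S (p k)) end).
  exists p; split.
  - intros n; apply (Hnext (S (p n))).
  - intros [|n]; apply Hnext.
Qed.

Lemma strictly_increasing_injective (p : nat -> nat) :
  (forall n, p n < p (S n))%nat -> Injective p.
Proof.
  intros Hp.
  assert (Hlt : forall m n, (m < n)%nat -> (p m < p n)%nat).
  { intros m n Hmn; induction Hmn as [|n _ IH]; [apply Hp|specialize (Hp n); lia]. }
  intros m n E; destruct (Nat.lt_trichotomy m n) as [h|[h|h]]; auto;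
    apply Hlt in h; lia.
Qed.

Definition partner (a : digit) : digit :=
  match a with d1 => d4 | d2 => d3 | d3 => d2 | d4 => d1 end.

(* [f2 o f4 = f3 o f1]: a block is one side of this identity, and [partner] maps it to
   the other side. *)
Definition is_block (a b : digit) : bool :=
  match a, b with
  | d2, d4 => true
  | d3, d1 => true
  | _, _ => false
  end.

Definition block_at (s : nat -> digit) (i : nat) : bool := is_block (s i) (s (S i)).

Lemma partner_neq a : partner a <> a.
Proof. destruct a; discriminate. Qed.

Lemma is_block_no_overlap a b c : is_block a b = true -> is_block b c = false.
Proof. destruct a, b, c; simpl; congruence. Qed.

Section Compositions.

Variable lam : R.

Definition transl (d : digit) : R := f lam d 0.

Definition finv (a : digit) (x : R) : R := (x - transl a) / lam.

Lemma f_affine d y : f lam d y = lam * y + transl d.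
Proof. destruct d; unfold transl; simpl; ring. Qed.

Lemma comp_affine s n y : comp lam s n y = comp lam s n 0 + lam ^ n * y.
Proof.
  revert y; induction n as [|n IH]; intros y; simpl; [ring|].
  rewrite (IH (f lam (s n) y)), (IH (f lam (s n) 0)), !f_affine; ring.
Qed.

Lemma comp_succ_0 s n : comp lam s (S n) 0 = comp lam s n 0 + lam ^ n * transl (s n).
Proof. simpl; rewrite comp_affine, f_affine; ring. Qed.

Lemma comp_scons a u n y : comp lam (scons a u) (S n) y = f lam a (comp lam u n y).
Proof. revert y; induction n as [|n IH]; intros y; [reflexivity|]; apply IH. Qed.

Lemma comp_add s n k y :
  comp lam s (n + k) y = comp lam s n (comp lam (fun i => s (n + i)%nat) k y).
Proof.
  revert y; induction k as [|k IH]; intros y.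
  - rewrite Nat.add_0_r; reflexivity.
  - rewrite Nat.add_succ_r; simpl; apply IH.
Qed.

End Compositions.

(* [c i] decides whether the block of [s] starting at position [i], if any, is replaced
   by its partner. *)
Definition swapped (s : nat -> digit) (c : nat -> bool) (i : nat) : bool :=
  (block_at s i && c i) || match i with O => false | S j => block_at s j && c j end.

Definition swap_blocks (s : nat -> digit) (c : nat -> bool) : nat -> digit :=
  fun i => if swapped s c i then partner (s i) else s i.

Lemma swap_blocks_noblock_head s c : block_at s 0 = false ->
  swap_blocks s c = scons (s 0%nat) (swap_blocks (shift s) (shift c)).
Proof.
  intros B; apply functional_extensionality; intros [|[|i]];
    unfold swap_blocks, swapped, shift; simpl; rewrite ?B; reflexivity.
Qed.

Lemma swap_blocks_block_head s c : block_at s 0 = true ->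
  swap_blocks s c =
  let r := swap_blocks (shift (shift s)) (shift (shift c)) in
  if c 0%nat then scons (partner (s 0%nat)) (scons (partner (s 1%nat)) r)
  else scons (s 0%nat) (scons (s 1%nat) r).
Proof.
  intros B; pose proof (is_block_no_overlap _ _ (s 2%nat) B) as B1.
  change (is_block (s 1%nat) (s 2%nat)) with (block_at s 1) in B1.
  apply functional_extensionality; intros [|[|[|i]]];
    unfold swap_blocks, swapped, shift; simpl; rewrite ?B, ?B1;
    destruct (c 0%nat); reflexivity.
Qed.

Lemma swap_blocks_at_block s c i : block_at s i = true ->
  swap_blocks s c i = if c i then partner (s i) else s i.
Proof.
  intros B; unfold swap_blocks, swapped; rewrite B; simpl.
  destruct i as [|j]; [rewrite Bool.orb_false_r; reflexivity|].
  unfold block_at in B |- *; destruct (is_block (s j) (s (S j))) eqn:Bj.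
  - rewrite (is_block_no_overlap _ _ _ Bj) in B; discriminate.
  - rewrite Bool.orb_false_r; reflexivity.
Qed.

Lemma attractor_backward_orbit (lam : R) (K : R -> Prop) :
  (forall x, K x <-> exists (i : digit) (y : R), K y /\ x = f lam i y) ->
  forall x, K x -> exists (s : nat -> digit) (z : nat -> R),
    z 0%nat = x /\ forall n, K (z n) /\ z n = f lam (s n) (z (S n)).
Proof.
  intros Hinv x Hx.
  assert (Hstep : forall w : {y | K y},
            {p : digit * {y | K y} | proj1_sig w = f lam (fst p) (proj1_sig (snd p))}).
  { intros [w Hw]; apply constructive_indefinite_description.
    destruct (proj1 (Hinv w) Hw) as [i [y [Hy E]]]; exists (i, exist K y Hy); exact E. }
  set (zs := fix zs n := match n with
             | O => exist K x Hx
             | S k => snd (proj1_sig (Hstep (zs k)))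
             end).
  exists (fun n => fst (proj1_sig (Hstep (zs n)))), (fun n => proj1_sig (zs n)).
  split; [reflexivity|]; intros n; split.
  - apply proj2_sig.
  - apply (proj2_sig (Hstep (zs n))).
Qed.

Section Contraction.

Variable lam : R.
Hypothesis lam_pos : 0 < lam.
Hypothesis lam_lt : lam < (5 - sqrt 21) / 2.

Lemma lam_gap : 0 < lam * lam - 5 * lam + 1.
Proof.
  pose proof (sqrt_sqrt 21 ltac:(lra)) as Hsq; pose proof (sqrt_pos 21).
  assert (0 < (5 + sqrt 21) / 2 - lam) by lra.
  assert (0 < ((5 - sqrt 21) / 2 - lam) * ((5 + sqrt 21) / 2 - lam))
    by (apply Rmult_lt_0_compat; lra).
  nra.
Qed.

Lemma lam_lt_quarter : lam < 1 / 4.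
Proof.
  pose proof (sqrt_sqrt 21 ltac:(lra)); pose proof (sqrt_pos 21).
  assert (9 / 2 < sqrt 21) by nra; lra.
Qed.

Lemma transl_bounds d : 0 <= transl lam d <= 1 - lam.
Proof.
  pose proof lam_lt_quarter; pose proof lam_gap.
  destruct d; unfold transl; simpl; nra.
Qed.

Lemma pow_lam_pos n : 0 < lam ^ n.
Proof. apply pow_lt; lra. Qed.

Lemma comp_bounds s n : 0 <= comp lam s n 0 <= 1 - lam ^ n.
Proof.
  induction n as [|n IH]; [simpl; lra|].
  rewrite comp_succ_0; pose proof (transl_bounds (s n)); pose proof (pow_lam_pos n).
  simpl; nra.
Qed.

Lemma comp_growing s : Un_growing (fun n => comp lam s n 0).
Proof.
  intros n; rewrite comp_succ_0; pose proof (transl_bounds (s n)); pose proof (pow_lam_pos n).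
  nra.
Qed.

(* [x] lies in [f_{s 0} o ... o f_{s (n-1)} ([0, 1])]. *)
Definition in_cylinder (n : nat) (s : nat -> digit) (x : R) : Prop :=
  comp lam s n 0 <= x <= comp lam s n 0 + lam ^ n.

Definition address (s : nat -> digit) (x : R) : Prop := forall n, in_cylinder n s x.

Lemma in_cylinder_succ n s x : in_cylinder (S n) s x -> in_cylinder n s x.
Proof.
  unfold in_cylinder; rewrite comp_succ_0.
  pose proof (transl_bounds (s n)); pose proof (pow_lam_pos n); simpl; nra.
Qed.

Lemma in_cylinder_scons n a u x :
  in_cylinder (S n) (scons a u) x <-> in_cylinder n u (finv lam a x).
Proof.
  unfold in_cylinder, finv; rewrite comp_scons, f_affine; simpl.
  pose proof (pow_lam_pos n).
  set (y := (x - transl lam a) / lam).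
  replace x with (lam * y + transl lam a) by (unfold y; field; lra).
  replace ((lam * y + transl lam a - transl lam a) / lam) with y by (field; lra).
  split; intros []; split; nra.
Qed.

Lemma address_scons a u x : address (scons a u) x <-> address u (finv lam a x).
Proof.
  split; intros H n.
  - apply in_cylinder_scons, H.
  - destruct n as [|n].
    + apply in_cylinder_succ, in_cylinder_scons, H.
    + apply in_cylinder_scons, H.
Qed.

Lemma coding_of_geometric_bound s x B :
  (forall n, Rabs (comp lam s n 0 - x) <= lam ^ n * B) -> coding lam s x.
Proof.
  intros H eps Heps.
  pose proof lam_lt_quarter.
  assert (0 <= B) by (specialize (H O); simpl in H; pose proof (Rabs_pos (0 - x)); lra).
  destruct (pow_lt_1_zero lam) with (y := eps / (B + 1)) as [N HN].
  - rewrite Rabs_right; lra.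
  - apply Rdiv_lt_0_compat; lra.
  - exists N; intros n Hn; unfold R_dist.
    specialize (HN n Hn); specialize (H n); pose proof (pow_lam_pos n).
    rewrite Rabs_right in HN by lra.
    apply Rmult_lt_compat_r with (r := B + 1) in HN; [|lra].
    unfold Rdiv in HN; rewrite Rmult_assoc, Rinv_l in HN by lra.
    nra.
Qed.

Lemma comp_le_cylinder_top s n m : comp lam s m 0 <= comp lam s n 0 + lam ^ n.
Proof.
  pose proof (pow_lam_pos n).
  destruct (Nat.le_gt_cases m n) as [Hmn|Hnm].
  - pose proof (tech9 _ (comp_growing s) m n Hmn); lra.
  - replace m with (n + (m - n))%nat by lia.
    rewrite comp_add, (comp_affine lam s n).
    pose proof (comp_bounds (fun i => s (n + i)%nat) (m - n)).
    pose proof (pow_lam_pos (m - n)); nra.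
Qed.

Lemma coding_address s x : coding lam s x <-> address s x.
Proof.
  split.
  - intros Hc n; split.
    + exact (growing_ineq _ _ (comp_growing s) Hc n).
    + apply (Rle_cv_lim (comp_le_cylinder_top s n) Hc).
      intros eps Heps; exists O; intros; rewrite R_dist_eq; exact Heps.
  - intros H; apply (coding_of_geometric_bound s x 1); intros n.
    destruct (H n); rewrite Rabs_left1; lra.
Qed.


Lemma address_shift s x : address s x -> address (shift s) (finv lam (s 0%nat) x).
Proof. rewrite <- (scons_head_shift s) at 1; apply address_scons. Qed.

Lemma address_scons2 a b u x :
  address (scons a (scons b u)) x <-> address u (finv lam b (finv lam a x)).
Proof. rewrite !address_scons; reflexivity. Qed.

Lemma finv_partner_block a b x : is_block a b = true ->
  finv lam (partner b) (finv lam (partner a) x) = finv lam b (finv lam a x).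
Proof. destruct a, b; simpl; intros H; try discriminate; unfold finv, transl; simpl; field; lra. Qed.

Lemma level_two_overlap a b c d x :
  transl lam a <= x <= transl lam a + lam ->
  transl lam c <= x <= transl lam c + lam ->
  transl lam a + lam * transl lam b <= x <= transl lam a + lam * transl lam b + lam * lam ->
  transl lam c + lam * transl lam d <= x <= transl lam c + lam * transl lam d + lam * lam ->
  c = a \/ (is_block a b = true /\ c = partner a /\ d = partner b).
Proof.
  pose proof lam_lt_quarter; pose proof lam_gap.
  assert (lam * lam < lam / 4) by nra.
  assert (lam * lam * lam < lam * lam / 4) by nra.
  intros; destruct a, b, c, d; unfold transl in *; simpl in *;
    first [ left; reflexivity | right; repeat split; reflexivity | exfalso; lra | exfalso; nra ].
Qed.

Lemma address_head s t x : address s x -> address t x ->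
  t 0%nat = s 0%nat \/
  (block_at s 0 = true /\ t 0%nat = partner (s 0%nat) /\ t 1%nat = partner (s 1%nat)).
Proof.
  intros Hs Ht.
  pose proof (Hs 1%nat); pose proof (Hs 2%nat); pose proof (Ht 1%nat); pose proof (Ht 2%nat).
  unfold in_cylinder in *; simpl in *; rewrite !f_affine in *.
  apply (level_two_overlap _ _ _ _ x); nra.
Qed.

Lemma address_unique s t x : (forall i, block_at s i = false) ->
  address s x -> address t x -> t = s.
Proof.
  intros Hb Hs Ht; apply functional_extensionality; intros n.
  revert s t x Hb Hs Ht; induction n as [|n IH]; intros s t x Hb Hs Ht;
    (destruct (address_head s t x Hs Ht) as [E|[B _]];
     [| rewrite Hb in B; discriminate]).
  - exact E.
  - apply (IH (shift s) (shift t) (finv lam (s 0%nat) x)).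
    + intros i; apply Hb.
    + apply address_shift, Hs.
    + rewrite <- E; apply address_shift, Ht.
Qed.

Lemma addresses_noblock_head s x : address s x -> block_at s 0 = false ->
  forall t, address t x <->
    exists u, t = scons (s 0%nat) u /\ address u (finv lam (s 0%nat) x).
Proof.
  intros Hs B t; split.
  - intros Ht; destruct (address_head s t x Hs Ht) as [E|[B' _]]; [|congruence].
    exists (shift t); split.
    + rewrite <- E; symmetry; apply scons_head_shift.
    + rewrite <- E; apply address_shift, Ht.
  - intros [u [-> Hu]]; apply address_scons, Hu.
Qed.

Lemma addresses_block_head s x : address s x -> block_at s 0 = true ->
  let a := s 0%nat in let b := s 1%nat in let z := finv lam b (finv lam a x) in
  forall t, address t x <->
    (exists u, t = scons a (scons b u) /\ address u z) \/
    (exists u, t = scons (partner a) (scons (partner b) u) /\ address u z).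
Proof.
  intros Hs B a b z t.
  pose proof (eq_sym (scons2_head_shift t)) as Et.
  split.
  - intros Ht; destruct (address_head s t x Hs Ht) as [E0|[_ [E0 E1]]].
    + left; exists (shift (shift t)).
      pose proof (address_shift s x Hs) as Hs1; pose proof (address_shift t x Ht) as Ht1.
      rewrite E0 in Ht1.
      destruct (address_head _ _ _ Hs1 Ht1) as [E1|[B1 _]].
      * change (t 1%nat = s 1%nat) in E1.
        rewrite Et, E0, E1, address_scons2 in Ht.
        split; [rewrite Et at 1; rewrite E0, E1; reflexivity | exact Ht].
      * unfold block_at, shift in B, B1; simpl in B1.
        rewrite (is_block_no_overlap _ _ _ B) in B1; discriminate.
    + right; exists (shift (shift t)).
      rewrite Et, E0, E1, address_scons2, finv_partner_block in Ht by exact B.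
      split; [rewrite Et, E0, E1; reflexivity | exact Ht].
  - intros [[u [-> Hu]]|[u [-> Hu]]]; apply address_scons2; [exact Hu|].
    rewrite finv_partner_block by exact B; exact Hu.
Qed.

Lemma card_addresses N : forall s x, address s x ->
  (forall i, (N <= i)%nat -> block_at s i = false) ->
  exists k, has_card (fun t => address t x) (2 ^ k).
Proof.
  induction N as [N IH] using lt_wf_ind; intros s x Hs Hb.
  destruct N as [|N].
  - exists O; apply (has_card_ext (fun t => t = s)); [|apply has_card_singleton].
    intros t; split; [intros ->; exact Hs|].
    intros Ht; apply (address_unique s t x); auto; intros i; apply Hb; lia.
  - destruct (block_at s 0) eqn:B.
    + destruct (IH N ltac:(lia) (shift (shift s)) (finv lam (s 1%nat) (finv lam (s 0%nat) x)))
        as [k Hk].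
      { apply address_scons2; rewrite scons2_head_shift; exact Hs. }
      { intros i Hi; apply Hb; lia. }
      exists (S k); replace (2 ^ S k)%nat with (2 ^ k + 2 ^ k)%nat by (simpl; lia).
      eapply has_card_ext; [symmetry; apply (addresses_block_head s x Hs B)|].
      apply has_card_disjoint_union; [|apply has_card_image; auto; intros u v E;
                                        exact (scons_inj _ _ _ (scons_inj _ _ _ E))..].
      intros t [u [-> _]] [v [E _]].
      apply (partner_neq (s 0%nat)); exact (f_equal (fun w => w 0%nat) (eq_sym E)).
    + destruct (IH N ltac:(lia) (shift s) (finv lam (s 0%nat) x)) as [k Hk].
      { apply address_shift, Hs. }
      { intros i Hi; apply Hb; lia. }
      exists k; eapply has_card_ext; [symmetry; apply (addresses_noblock_head s x Hs B)|].
      apply has_card_image; [intros u v; apply scons_inj | exact Hk].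
Qed.

Lemma address_swap_blocks s c x : address s x -> address (swap_blocks s c) x.
Proof.
  intros Hs n; revert s c x Hs.
  induction n as [n IH] using lt_wf_ind; intros s c x Hs.
  destruct n as [|n]; [exact (Hs O)|].
  destruct (block_at s 0) eqn:B.
  - apply in_cylinder_succ; rewrite swap_blocks_block_head by exact B; cbv zeta.
    pose proof Hs as Hz; rewrite <- (scons2_head_shift s), address_scons2 in Hz.
    destruct (c 0%nat); apply in_cylinder_scons, in_cylinder_scons, IH; auto.
    rewrite finv_partner_block by exact B; exact Hz.
  - rewrite swap_blocks_noblock_head by exact B.
    apply in_cylinder_scons, IH; [lia|]; apply address_shift, Hs.
Qed.

Lemma addresses_uncountable s x : address s x ->
  (forall N, exists i, (N <= i)%nat /\ block_at s i = true) ->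
  ~ countable_set (fun t => address t x).
Proof.
  intros Hs Hinf [g Hg].
  destruct (strictly_increasing_enumeration _ Hinf) as [p [Hp Hblock]].
  destruct (injective_left_inverse 0%nat p (strictly_increasing_injective p Hp)) as [q Hq].
  set (F := fun b : nat -> bool => swap_blocks s (fun i => b (q i))).
  apply (cantor_no_injection (fun b => g (F b))); intros b b' E.
  apply Hg in E; try apply address_swap_blocks, Hs.
  apply functional_extensionality; intros n.
  pose proof (f_equal (fun t => t (p n)) E) as En; unfold F in En; simpl in En.
  rewrite !swap_blocks_at_block, !Hq in En by apply Hblock.
  pose proof (partner_neq (s (p n))).
  destruct (b n), (b' n); congruence.
Qed.

Lemma attractor_coding K : is_attractor lam K -> forall x, K x -> exists s, coding lam s x.
Proof.
  intros [Hc [_ Hinv]] x Hx.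
  destruct (compact_P1 K Hc) as [m [M HmM]].
  destruct (attractor_backward_orbit lam K Hinv x Hx) as [s [z [Hz0 Hz]]].
  exists s; apply (coding_of_geometric_bound s x (Rabs m + Rabs M)); intros n.
  assert (Hxn : comp lam s n (z n) = x).
  { rewrite <- Hz0; induction n as [|n IH]; [reflexivity|].
    simpl; rewrite <- (proj2 (Hz n)); exact IH. }
  rewrite <- Hxn, (comp_affine lam s n (z n)).
  replace (comp lam s n 0 - (comp lam s n 0 + lam ^ n * z n)) with (- (lam ^ n * z n)) by ring.
  pose proof (pow_lam_pos n).
  rewrite Rabs_Ropp, Rabs_mult, (Rabs_right (lam ^ n)) by lra.
  apply Rmult_le_compat_l; [lra|].
  destruct (HmM _ (proj1 (Hz n))); unfold Rabs; repeat destruct Rcase_abs; lra.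
Qed.

End Contraction.

Theorem corollary2p24 (lam : R) (K : R -> Prop)
  (Hlam0 : 0 < lam) (Hlam1 : lam < (5 - sqrt 21) / 2)
  (HK : is_attractor lam K) :
  forall x, K x ->
    (exists k : nat, has_card (fun s => coding lam s x) (2 ^ k)%nat)
    \/ ~ countable_set (fun s => coding lam s x).
Proof.
  intros x Hx.
  destruct (attractor_coding lam Hlam0 Hlam1 K HK x Hx) as [s Hs].
  rewrite (coding_address lam Hlam0 Hlam1) in Hs.
  replace (fun t => coding lam t x) with (fun t => address lam t x)
    by (apply functional_extensionality; intros t;
        apply propositional_extensionality; symmetry; apply coding_address; assumption).
  destruct (classic (exists N, forall i, (N <= i)%nat -> block_at s i = false))
    as [[N Hfin]|Hinf].
  - left; exact (card_addresses lam Hlam0 Hlam1 N s x Hs Hfin).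
  - right; apply (addresses_uncountable lam Hlam0 Hlam1 s x Hs); intros N.
    apply not_all_not_ex; intros H; apply Hinf; exists N; intros i Hi.
    apply Bool.not_true_is_false; intros B; exact (H i (conj Hi B)).
Qed.
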